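(* Let $N=\{1,\dots,n\}$, let $\tilde Q\in\mathbb{R}^{n\times n}$ be symmetric positive definite, $\tilde d\in\mathbb{R}^n$, and $a,b\in\mathbb{R}^n$ with $b\le a$ componentwise. Let $A,B\subseteq N$ be disjoint, $I=N\setminus(A\cup B)$, and let $(x,s,t)$ be the KKT solution for $(A,B)$. Let $C=\{i: x_i<b_i \text{ or } s_i<0\}$, $D=\{i: x_i>a_i \text{ or } t_i>0\}$, and let $(y,u,v)$ be the KKT solution for $(C,D)$. Define $S=\{i\in A: s_i\ge0\}$, $T=\{i\in B: t_i\le 0\}$, $U=\{i\in I: x_i<b_i\}$, $V=\{i\in I: x_i>a_i\}$, $R=I\setminus(U\cup V)$, $K=\{i\in S\cup T\cup R: y_i<b_i\}$ and $L=\{i\in S\cup T\cup R: y_i>a_i\}$. With $g(w)=\max(b-w,0)$ and $h(w)=\max(w-a,0)$ (componentwise), we have $$\|g(y)\|^2-\|g(x)\|^2=\sum_{i\in K}|y_i-b_i|^2-\sum_{i\in U}|x_i-b_i|^2$$ and $$\|h(y)\|^2-\|h(x)\|^2=\sum_{i\in L}|y_i-a_i|^2-\sum_{i\in V}|x_i-a_i|^2.$$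
   Context: For disjoint $A_1,A_2\subseteq N$, the KKT solution for $(A_1,A_2)$ is the unique triple $(x,s,t)\in(\mathbb{R}^n)^3$ with $x_{A_1}=b_{A_1}$, $x_{A_2}=a_{A_2}$, $s_i=0$ for $i\notin A_1$, $t_i=0$ for $i\notin A_2$, and $\tilde Qx+\tilde d+s+t=0$. The sets $C$ and $D$ are disjoint. $\|\cdot\|$ is the Euclidean norm. *)

From HB Require Import structures.
From mathcomp Require Import all_boot all_order all_algebra.
Set Implicit Arguments. Unset Strict Implicit. Unset Printing Implicit Defensive.
Import Order.TTheory GRing.Theory Num.Theory.
Local Open Scope ring_scope.

(* Index set N = {1..n} is rendered as 'I_n; vectors as column vectors 'cV_n. *)

Definition sym_posdef (R : realFieldType) (n : nat) (Q : 'M[R]_n) : Prop :=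
  Q^T = Q /\ forall z : 'cV[R]_n, z != 0 -> 0 < (z^T *m Q *m z) 0 0.

Definition is_KKT_solution (R : realFieldType) (n : nat) (Q : 'M[R]_n)
    (d a b : 'cV[R]_n) (A1 A2 : {set 'I_n}) (x s t : 'cV[R]_n) : Prop :=
  [/\ forall i, i \in A1 -> x i 0 = b i 0,
      forall i, i \in A2 -> x i 0 = a i 0,
      forall i, i \notin A1 -> s i 0 = 0,
      forall i, i \notin A2 -> t i 0 = 0 &
      Q *m x + d + s + t = 0].

Definition enorm (R : rcfType) (n : nat) (v : 'cV[R]_n) : R :=
  Num.sqrt (\sum_(i < n) v i 0 ^+ 2).

Definition gfun (R : realFieldType) (n : nat) (b w : 'cV[R]_n) : 'cV[R]_n :=
  \col_i Num.max (b i 0 - w i 0) 0.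
Definition hfun (R : realFieldType) (n : nat) (a w : 'cV[R]_n) : 'cV[R]_n :=
  \col_i Num.max (w i 0 - a i 0) 0.

(* Both identities are statements about which coordinates violate a bound.
   A KKT solution for (A1, A2) sits exactly on a bound at every index of
   A1 and A2, so, as b <= a, its violations lie outside A1 :|: A2.  Hence x
   violates the lower bound exactly on U, and y exactly on indices outside
   C :|: D; such an index is in A with s_i >= 0, in B with t_i <= 0, or in
   I with b_i <= x_i <= a_i, i.e. in S :|: T :|: R, so y violates the lower
   bound exactly on K.  The upper bound is symmetric.  The squared norm of
   the positive part of a vector is the sum of squares over its positive
   coordinates, which gives both equalities. *)
From HB Require Import structures.
From mathcomp Require Import all_boot all_order all_algebra.
Set Implicit Arguments. Unset Strict Implicit. Unset Printing Implicit Defensive.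
Import Order.TTheory GRing.Theory Num.Theory.
Local Open Scope ring_scope.

Lemma enorm_sqr (R : rcfType) (n : nat) (v : 'cV[R]_n) :
  enorm v ^+ 2 = \sum_i v i 0 ^+ 2.
Proof. by rewrite sqr_sqrtr // sumr_ge0 // => i _; rewrite sqr_ge0. Qed.

Lemma sqr_max0 (R : realDomainType) (c : R) :
  Num.max c 0 ^+ 2 = if 0 < c then `|c| ^+ 2 else 0.
Proof. by case: ltrP => [c_gt0|_]; rewrite ?gtr0_norm ?expr0n. Qed.

Lemma sum_sqr_max0 (R : realDomainType) (I : finType) (c : I -> R) :
  \sum_i Num.max (c i) 0 ^+ 2 = \sum_(i | 0 < c i) `|c i| ^+ 2.
Proof. by rewrite [RHS]big_mkcond; apply: eq_bigr => i _; rewrite sqr_max0. Qed.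

Section PositivePartNorms.

Variables (R : rcfType) (n : nat).
Implicit Types (a b w : 'cV[R]_n).

Lemma enorm_gfun_sqr b w :
  enorm (gfun b w) ^+ 2 = \sum_(i | w i 0 < b i 0) `|w i 0 - b i 0| ^+ 2.
Proof.
rewrite enorm_sqr; under eq_bigr do rewrite mxE.
rewrite sum_sqr_max0; apply: eq_big => i; first by rewrite subr_gt0.
by rewrite -normrN opprB.
Qed.

Lemma enorm_hfun_sqr a w :
  enorm (hfun a w) ^+ 2 = \sum_(i | a i 0 < w i 0) `|w i 0 - a i 0| ^+ 2.
Proof.
rewrite enorm_sqr; under eq_bigr do rewrite mxE.
by rewrite sum_sqr_max0; apply: eq_bigl => i; rewrite subr_gt0.
Qed.

End PositivePartNorms.

Section BoundViolations.

Variables (R : realDomainType) (n : nat) (a b w : 'cV[R]_n) (A1 A2 : {set 'I_n}).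
Hypothesis le_ba : forall i, b i 0 <= a i 0.
Hypothesis w_A1 : forall i, i \in A1 -> w i 0 = b i 0.
Hypothesis w_A2 : forall i, i \in A2 -> w i 0 = a i 0.

Lemma lower_violation_notin_fixed i : w i 0 < b i 0 -> i \notin A1 :|: A2.
Proof.
move=> w_lt_b; rewrite in_setU negb_or; apply/andP; split; apply/negP => iA.
  by move: w_lt_b; rewrite w_A1 // ltxx.
by move: w_lt_b; rewrite w_A2 // ltNge le_ba.
Qed.

Lemma upper_violation_notin_fixed i : a i 0 < w i 0 -> i \notin A1 :|: A2.
Proof.
move=> a_lt_w; rewrite in_setU negb_or; apply/andP; split; apply/negP => iA.
  by move: a_lt_w; rewrite w_A1 // ltNge le_ba.
by move: a_lt_w; rewrite w_A2 // ltxx.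
Qed.

Lemma restrict_lower_violations (F : {set 'I_n}) :
  ~: (A1 :|: A2) \subset F ->
  [set i in F | w i 0 < b i 0] =i [pred i | w i 0 < b i 0].
Proof.
move=> sub_F i; rewrite !inE andb_idl // => w_lt_b.
by apply: (subsetP sub_F); rewrite inE lower_violation_notin_fixed.
Qed.

Lemma restrict_upper_violations (F : {set 'I_n}) :
  ~: (A1 :|: A2) \subset F ->
  [set i in F | a i 0 < w i 0] =i [pred i | a i 0 < w i 0].
Proof.
move=> sub_F i; rewrite !inE andb_idl // => a_lt_w.
by apply: (subsetP sub_F); rewrite inE upper_violation_notin_fixed.
Qed.

End BoundViolations.

Lemma unswitched_sub_kept (R : realDomainType) (n : nat) (a b x s t : 'cV[R]_n)
    (A B : {set 'I_n}) :
  ~: ([set i | (x i 0 < b i 0) || (s i 0 < 0)]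
      :|: [set i | (x i 0 > a i 0) || (t i 0 > 0)])
  \subset [set i in A | 0 <= s i 0] :|: [set i in B | t i 0 <= 0]
     :|: ~: (A :|: B) :\: ([set i in ~: (A :|: B) | x i 0 < b i 0]
                          :|: [set i in ~: (A :|: B) | x i 0 > a i 0]).
Proof.
apply/subsetP => i; rewrite !inE !negb_or -!leNgt.
move=> /andP[/andP[x_ge_b s_ge0] /andP[x_le_a t_le0]].
case: (i \in A); first by rewrite s_ge0.
case: (i \in B); first by rewrite t_le0.
by rewrite !ltNge x_ge_b x_le_a.
Qed.

Theorem mainTheorem2 (R : rcfType) (n : nat) (Q : 'M[R]_n) (d a b : 'cV[R]_n)
  (A B : {set 'I_n}) (x s t y u v : 'cV[R]_n) :
  sym_posdef Q ->
  (forall i, b i 0 <= a i 0) ->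
  [disjoint A & B] ->
  is_KKT_solution Q d a b A B x s t ->
  let C := [set i | (x i 0 < b i 0) || (s i 0 < 0)] in
  let D := [set i | (x i 0 > a i 0) || (t i 0 > 0)] in
  is_KKT_solution Q d a b C D y u v ->
  let I := ~: (A :|: B) in
  let S := [set i in A | 0 <= s i 0] in
  let T := [set i in B | t i 0 <= 0] in
  let U := [set i in I | x i 0 < b i 0] in
  let V := [set i in I | x i 0 > a i 0] in
  let Rs := I :\: (U :|: V) in
  let K := [set i in S :|: T :|: Rs | y i 0 < b i 0] in
  let L := [set i in S :|: T :|: Rs | y i 0 > a i 0] in
  enorm (gfun b y) ^+ 2 - enorm (gfun b x) ^+ 2
    = \sum_(i in K) `|y i 0 - b i 0| ^+ 2 - \sum_(i in U) `|x i 0 - b i 0| ^+ 2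
  /\
  enorm (hfun a y) ^+ 2 - enorm (hfun a x) ^+ 2
    = \sum_(i in L) `|y i 0 - a i 0| ^+ 2 - \sum_(i in V) `|x i 0 - a i 0| ^+ 2.
Proof.
move=> _ le_ba _ [x_A x_B _ _ _] C D [y_C y_D _ _ _] I S T U V Rs K L.
have kept := unswitched_sub_kept a b x s t A B.
have x_U := restrict_lower_violations le_ba x_A x_B (subxx I).
have x_V := restrict_upper_violations le_ba x_A x_B (subxx I).
have y_K := restrict_lower_violations le_ba y_C y_D kept.
have y_L := restrict_upper_violations le_ba y_C y_D kept.
split.
  by rewrite !enorm_gfun_sqr (eq_bigl _ _ x_U) (eq_bigl _ _ y_K).
by rewrite !enorm_hfun_sqr (eq_bigl _ _ x_V) (eq_bigl _ _ y_L).
Qed.
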